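(* For every $n,m\in\mathbb N^*$, Hermitian $H_0,\dots,H_m\in\mathbb H_n$ and $h_1,\dots,h_m\in\mathbb R$: for every feasible point $X$ of SDP-$\mathbb R$ there exists a feasible point $\tilde X$ of SDP-$\mathbb R$ with $\tilde X_{11}=0$ and $\operatorname{Tr}(\Lambda(H_i)\tilde X)=\operatorname{Tr}(\Lambda(H_i)X)$ for all $i=0,\dots,m$. In particular, adding the constraint $X_{11}=0$ to SDP-$\mathbb R$ does not change its optimal value.
   Context: $\mathbb H_n$: Hermitian $n\times n$ matrices; $\mathbb S_{2n}$: real symmetric $2n\times2n$ matrices; $\Lambda(Z):=\begin{pmatrix}\operatorname{Re}Z&-\operatorname{Im}Z\\ \operatorname{Im}Z&\operatorname{Re}Z\end{pmatrix}$. SDP-$\mathbb R$: $\inf_{X\in\mathbb S_{2n}}\operatorname{Tr}(\Lambda(H_0)X)$ s.t. $\operatorname{Tr}(\Lambda(H_i)X)\le h_i$, $i=1,\dots,m$, and $X\succeq0$. *)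

(* Complex numbers: an arbitrary numClosedFieldType C
   (e.g. algC); real numbers are the elements x of C with x \is Num.real. *)
From HB Require Import structures.
From mathcomp Require Import all_boot all_order all_algebra.
Set Implicit Arguments. Unset Strict Implicit. Unset Printing Implicit Defensive.
Import Order.TTheory GRing.Theory Num.Theory.
Local Open Scope ring_scope.

Definition hermitian_mx (C : numClosedFieldType) (n : nat) (Z : 'M[C]_n) : Prop :=
  (map_mx (fun z : C => z^*) Z)^T = Z.

Definition real_mx (C : numClosedFieldType) (p q : nat) (A : 'M[C]_(p, q)) : Prop :=
  forall i j, A i j \is Num.real.

Definition Lambda (C : numClosedFieldType) (n : nat) (Z : 'M[C]_n) : 'M[C]_(n + n) :=
  block_mx (map_mx (fun z => 'Re z) Z) (- map_mx (fun z => 'Im z) Z)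
           (map_mx (fun z => 'Im z) Z) (map_mx (fun z => 'Re z) Z).

Definition real_psd (C : numClosedFieldType) (p : nat) (X : 'M[C]_p) : Prop :=
  [/\ real_mx X, X^T = X &
      forall v : 'rV[C]_p, real_mx v -> 0 <= (v *m X *m v^T) 0 0].

Definition sdpR_feasible (C : numClosedFieldType) (n m : nat)
  (H : 'I_m -> 'M[C]_n) (h : 'I_m -> C) (X : 'M[C]_(n + n)) : Prop :=
  real_psd X /\ forall i, \tr (Lambda (H i) *m X) <= h i.

From HB Require Import structures.
From mathcomp Require Import all_boot all_order all_algebra.
From mathcomp Require Import ring.
Import Order.TTheory GRing.Theory Num.Theory.
Local Open Scope ring_scope.
Set Implicit Arguments. Unset Strict Implicit.

(* Every Lambda(Z), Hermitian or not, commutes with the complex structure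
   J = [[0, -1], [1, 0]], so X may first be replaced by its J-average
   (X - J X J) / 2, which is still feasible, has the same values
   tr(Lambda(Z) _) and commutes with J.  For such a Y, with e the first unit
   row and a = Y_11, commuting with J makes u Y (u J)^T = 0 for every row u;
   hence the rank-two correction
     Y + ((e Y J)^T (e Y J) - (e Y)^T (e Y)) / a
   has (1,1) entry a - a^2 / a = 0, its quadratic form
     v Y v^T - (v Y e^T)^2 / a + (v Y J^T e^T)^2 / a
   is nonnegative by Cauchy-Schwarz, and tr(Lambda(Z) _) is unchanged since
   J Lambda(Z) J^T = Lambda(Z). *)

Section RealMatrices.
Variable C : numClosedFieldType.

Lemma real_mxD p q (A B : 'M[C]_(p, q)) : real_mx A -> real_mx B -> real_mx (A + B).
Proof. by move=> hA hB i j; rewrite mxE rpredD. Qed.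

Lemma real_mxN p q (A : 'M[C]_(p, q)) : real_mx A -> real_mx (- A).
Proof. by move=> hA i j; rewrite mxE rpredN. Qed.

Lemma real_mxB p q (A B : 'M[C]_(p, q)) : real_mx A -> real_mx B -> real_mx (A - B).
Proof. by move=> hA hB; apply/real_mxD/real_mxN. Qed.

Lemma real_mxZ p q k (A : 'M[C]_(p, q)) :
  k \is Num.real -> real_mx A -> real_mx (k *: A).
Proof. by move=> hk hA i j; rewrite mxE rpredM. Qed.

Lemma real_mxM p q r (A : 'M[C]_(p, q)) (B : 'M[C]_(q, r)) :
  real_mx A -> real_mx B -> real_mx (A *m B).
Proof. by move=> hA hB i j; rewrite mxE rpred_sum // => k _; rewrite rpredM. Qed.

Lemma real_mxT p q (A : 'M[C]_(p, q)) : real_mx A -> real_mx A^T.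
Proof. by move=> hA i j; rewrite mxE. Qed.

Lemma real_mx0 p q : real_mx (0 : 'M[C]_(p, q)).
Proof. by move=> i j; rewrite mxE. Qed.

Lemma real_mx1 p : real_mx (1%:M : 'M[C]_p).
Proof. by move=> i j; rewrite mxE rpred_nat. Qed.

Lemma real_delta_mx p q i0 j0 : real_mx (delta_mx i0 j0 : 'M[C]_(p, q)).
Proof. by move=> i j; rewrite mxE rpred_nat. Qed.

Lemma real_block_mx p1 p2 q1 q2 (A : 'M[C]_(p1, q1)) (B : 'M[C]_(p1, q2))
    (D : 'M[C]_(p2, q1)) (E : 'M[C]_(p2, q2)) :
  real_mx A -> real_mx B -> real_mx D -> real_mx E -> real_mx (block_mx A B D E).
Proof.
move=> hA hB hD hE i j.
case: (split_ordP i) => i' ->; case: (split_ordP j) => j' ->.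
- by rewrite block_mxEul.
- by rewrite block_mxEur.
- by rewrite block_mxEdl.
- by rewrite block_mxEdr.
Qed.

Definition mxform p (M : 'M[C]_p) (u v : 'rV[C]_p) : C := (u *m M *m v^T) 0 0.

Lemma mxformDl p (M : 'M[C]_p) u1 u2 v :
  mxform M (u1 + u2) v = mxform M u1 v + mxform M u2 v.
Proof. by rewrite /mxform !mulmxDl mxE. Qed.

Lemma mxformDr p (M : 'M[C]_p) u v1 v2 :
  mxform M u (v1 + v2) = mxform M u v1 + mxform M u v2.
Proof. by rewrite /mxform linearD /= mulmxDr mxE. Qed.

Lemma mxformZl p (M : 'M[C]_p) k u v : mxform M (k *: u) v = k * mxform M u v.
Proof. by rewrite /mxform -!scalemxAl mxE. Qed.

Lemma mxformZr p (M : 'M[C]_p) k u v : mxform M u (k *: v) = k * mxform M u v.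
Proof. by rewrite /mxform linearZ /= -scalemxAr mxE. Qed.

Lemma mxformNl p (M : 'M[C]_p) u v : mxform M (- u) v = - mxform M u v.
Proof. by rewrite -scaleN1r mxformZl mulN1r. Qed.

Lemma mxformNr p (M : 'M[C]_p) u v : mxform M u (- v) = - mxform M u v.
Proof. by rewrite -scaleN1r mxformZr mulN1r. Qed.

Lemma mxformC p (M : 'M[C]_p) u v : M^T = M -> mxform M u v = mxform M v u.
Proof.
move=> sM; rewrite /mxform; transitivity ((u *m M *m v^T)^T 0 0); first by rewrite [RHS]mxE.
by rewrite !trmx_mul sM trmxK mulmxA.
Qed.

Lemma mxform_delta p (M : 'M[C]_p) i j : mxform M (delta_mx 0 i) (delta_mx 0 j) = M i j.
Proof. by rewrite /mxform trmx_delta -rowE -colE !mxE. Qed.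

Lemma real_mxform p (M : 'M[C]_p) u v :
  real_mx M -> real_mx u -> real_mx v -> mxform M u v \is Num.real.
Proof. by move=> hM hu hv; apply: (real_mxM (real_mxM hu hM) (real_mxT hv)). Qed.

Lemma mxform_addmx p (A B : 'M[C]_p) u v : mxform (A + B) u v = mxform A u v + mxform B u v.
Proof. by rewrite /mxform mulmxDr mulmxDl mxE. Qed.

Lemma mxform_submx p (A B : 'M[C]_p) u v : mxform (A - B) u v = mxform A u v - mxform B u v.
Proof. by rewrite /mxform mulmxBr mulmxBl mxE [X in _ + X]mxE. Qed.

Lemma mxform_scalemx p k (A : 'M[C]_p) u v : mxform (k *: A) u v = k * mxform A u v.
Proof. by rewrite /mxform -scalemxAr -scalemxAl mxE. Qed.

Lemma mxform_mulmx p (A M B : 'M[C]_p) u v :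
  mxform (A *m M *m B) u v = mxform M (u *m A) (v *m B^T).
Proof. by rewrite /mxform trmx_mul trmxK !mulmxA. Qed.

Lemma mxform_outer p (x : 'rV[C]_p) u : mxform (x^T *m x) u u = ((u *m x^T) 0 0) ^+ 2.
Proof.
rewrite /mxform mulmxA -mulmxA mxE big_ord1 expr2; congr (_ * _).
transitivity ((x *m u^T)^T 0 0); first by rewrite [RHS]mxE.
by rewrite trmx_mul trmxK.
Qed.

Lemma real_psd_CauchySchwarz p (Y : 'M[C]_p) u v :
  real_psd Y -> real_mx u -> real_mx v -> 0 < mxform Y u u ->
  mxform Y u v ^+ 2 <= mxform Y u u * mxform Y v v.
Proof.
case=> rY sY pY ru rv a_gt0.
set a := mxform Y u u; set b := mxform Y u v.
have b_real : b \is Num.real by apply: real_mxform.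
pose w := v - (b / a) *: u.
have : 0 <= mxform Y w w.
  apply/pY/real_mxB/real_mxZ => //.
  by rewrite rpredM // rpredV gtr0_real.
have -> : mxform Y w w = mxform Y v v - b ^+ 2 / a.
  rewrite /w !(mxformDl, mxformDr, mxformNl, mxformNr, mxformZl, mxformZr).
  rewrite (mxformC v u sY) -/a -/b.
  by field; rewrite gt_eqF.
by rewrite subr_ge0 ler_pdivrMr // mulrC.
Qed.

End RealMatrices.

Section ComplexStructure.
Variables (C : numClosedFieldType) (p : nat) (J : 'M[C]_p).
Hypotheses (real_J : real_mx J) (trJ : J^T = - J) (mulJJ : J *m J = - 1%:M).

Lemma trmx_mulJ (v : 'rV[C]_p) : (v *m J)^T = - (J *m v^T).
Proof. by rewrite trmx_mul trJ mulNmx. Qed.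

Definition Javg (X : 'M[C]_p) : 'M[C]_p := 2^-1 *: (X - J *m X *m J).

Lemma Javg_comm X : Javg X *m J = J *m Javg X.
Proof.
rewrite /Javg -scalemxAl -scalemxAr; congr (_ *: _).
rewrite mulmxBl mulmxBr -!mulmxA mulJJ !mulmxA mulJJ mulmxN mulmx1 mulNmx mul1mx.
by rewrite !mulNmx !opprK addrC.
Qed.

Lemma Javg_psd X : real_psd X -> real_psd (Javg X).
Proof.
case=> rX sX pX; split.
- apply/real_mxZ/real_mxB; rewrite ?rpredV ?rpred_nat //.
  exact/real_mxM/real_J/real_mxM.
- rewrite /Javg linearZ /= linearD /= linearN /= !trmx_mul trJ sX.
  by rewrite !mulmxN !mulNmx !opprK mulmxA.
move=> v rv; change (0 <= mxform (Javg X) v v).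
have pvJ := pX _ (real_mxM rv real_J).
have -> : mxform (Javg X) v v = 2^-1 * (mxform X v v + mxform X (v *m J) (v *m J)).
  by rewrite mxform_scalemx mxform_submx mxform_mulmx trJ mulmxN mxformNr opprK.
by rewrite mulr_ge0 ?invr_ge0 ?ler0n ?addr_ge0 //; apply: pX.
Qed.

Lemma mxtrace_Javg (M X : 'M[C]_p) :
  M *m J = J *m M -> \tr (M *m Javg X) = \tr (M *m X).
Proof.
move=> MJ; rewrite /Javg -scalemxAr linearZ /= mulmxBr linearB /=.
have -> : \tr (M *m (J *m X *m J)) = - \tr (M *m X).
  rewrite mulmxA mxtrace_mulC !mulmxA -MJ -[M *m J *m J]mulmxA mulJJ.
  by rewrite mulmxN mulmx1 mulNmx linearN.
have two_neq0 : (2 : C) != 0 by rewrite pnatr_eq0.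
by rewrite opprK; field.
Qed.

Lemma mxtrace_outer_mulJ (M : 'M[C]_p) (x : 'rV[C]_p) : M *m J = J *m M ->
  \tr (M *m ((x *m J)^T *m (x *m J))) = \tr (M *m (x^T *m x)).
Proof.
move=> MJ; rewrite !(mulmxA M) [LHS]mxtrace_mulC [RHS]mxtrace_mulC; congr (\tr _).
rewrite trmx_mulJ mulmxN (mulmxA M) MJ -!mulmxA mulmxN [J *m (J *m _)]mulmxA mulJJ.
by rewrite mulNmx mul1mx opprK.
Qed.

Section CommutingForm.
Variable Y : 'M[C]_p.
Hypotheses (sY : Y^T = Y) (YJ : Y *m J = J *m Y).

Lemma mxform_mulJr u v : mxform Y u (v *m J) = - mxform Y (u *m J) v.
Proof. by rewrite /mxform trmx_mulJ mulmxN -!mulmxA (mulmxA Y) YJ !mulmxA mxE. Qed.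

Lemma mxform_mulJ_self u : mxform Y u (u *m J) = 0.
Proof.
have anti : mxform Y u (u *m J) = - mxform Y u (u *m J).
  by rewrite {1}mxformC // mxform_mulJr opprK.
have : 2 * mxform Y u (u *m J) = 0 by rewrite mulr2n mulrDl mul1r {1}anti addNr.
by move/eqP; rewrite mulf_eq0 pnatr_eq0 => /eqP.
Qed.

End CommutingForm.

Definition kill_diag (Y : 'M[C]_p) (i : 'I_p) : 'M[C]_p :=
  let e := delta_mx 0 i in
  Y + (mxform Y e e)^-1 *: ((e *m Y *m J)^T *m (e *m Y *m J) - (e *m Y)^T *m (e *m Y)).

Section KillDiag.
Variables (Y : 'M[C]_p) (i : 'I_p).
Hypotheses (psdY : real_psd Y) (YJ : Y *m J = J *m Y).

Let e : 'rV[C]_p := delta_mx 0 i.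
Let a := mxform Y e e.
Let real_e : real_mx e. Proof. exact: real_delta_mx. Qed.
Let sY : Y^T = Y. Proof. by case: psdY. Qed.
Let rY : real_mx Y. Proof. by case: psdY. Qed.
Let psd_form v : real_mx v -> 0 <= mxform Y v v. Proof. by case: psdY => _ _; apply. Qed.

Lemma mxform_kill_diag v : mxform (kill_diag Y i) v v =
  mxform Y v v + a^-1 * (mxform Y v (e *m J) ^+ 2 - mxform Y v e ^+ 2).
Proof.
rewrite /kill_diag mxform_addmx mxform_scalemx mxform_submx !mxform_outer -/e -/a.
have rowY w : (v *m (w *m Y)^T) 0 0 = mxform Y v w by rewrite trmx_mul sY mulmxA.
by rewrite -mulmxA YJ mulmxA !rowY.
Qed.

Lemma kill_diag_psd : real_psd (kill_diag Y i).
Proof.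
have a_ge0 : 0 <= a := psd_form real_e.
have real_eY : real_mx (e *m Y) := real_mxM real_e rY.
have real_eYJ : real_mx (e *m Y *m J) := real_mxM real_eY real_J.
split.
- apply/real_mxD/real_mxZ/real_mxB; rewrite ?rpredV ?ger0_real //;
    by apply: real_mxM => //; apply: real_mxT.
- by rewrite /kill_diag /= linearD /= linearZ /= linearB /= !trmx_mul !trmxK sY.
move=> v rv; change (0 <= mxform (kill_diag Y i) v v); rewrite mxform_kill_diag.
have [->|a_neq0] := eqVneq a 0; first by rewrite invr0 mul0r addr0; apply: psd_form.
have a_gt0 : 0 < a by rewrite lt_def a_neq0.
have CS := real_psd_CauchySchwarz psdY real_e rv a_gt0.
set b := mxform Y v e; set c := mxform Y v (e *m J).
have -> : mxform Y v v + a^-1 * (c ^+ 2 - b ^+ 2) = (mxform Y v v - b ^+ 2 / a) + c ^+ 2 / a.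
  by ring.
apply: addr_ge0.
  by rewrite subr_ge0 ler_pdivrMr // mulrC /b (mxformC v e sY).
by rewrite divr_ge0 // -realEsqr real_mxform //; apply: real_mxM.
Qed.

Lemma kill_diag_diag : kill_diag Y i i i = 0.
Proof.
rewrite -mxform_delta -/e mxform_kill_diag mxform_mulJ_self // -/a.
have [->|a_neq0] := eqVneq a 0; first by rewrite invr0 mul0r addr0.
by rewrite expr0n /= sub0r mulrN expr2 mulKf // subrr.
Qed.

Lemma mxtrace_kill_diag (M : 'M[C]_p) :
  M *m J = J *m M -> \tr (M *m kill_diag Y i) = \tr (M *m Y).
Proof.
move=> MJ; rewrite /kill_diag mulmxDr linearD /= -scalemxAr linearZ /=.
by rewrite mulmxBr linearB /= mxtrace_outer_mulJ // subrr mulr0 addr0.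
Qed.

End KillDiag.
End ComplexStructure.

Section Lambda.
Variables (C : numClosedFieldType) (n : nat).

Definition Lambda_J : 'M[C]_(n + n) := block_mx 0 (- 1%:M) 1%:M 0.

Lemma Lambda_J_real : real_mx Lambda_J.
Proof.
apply: real_block_mx; [exact: real_mx0 | exact/real_mxN/real_mx1 |
                       exact: real_mx1 | exact: real_mx0].
Qed.

Lemma trmx_Lambda_J : Lambda_J^T = - Lambda_J.
Proof.
rewrite /Lambda_J tr_block_mx !trmx0 linearN /= trmx1.
by rewrite opp_block_mx !oppr0 opprK.
Qed.

Lemma Lambda_J_mulJJ : Lambda_J *m Lambda_J = - 1%:M.
Proof.
rewrite /Lambda_J mulmx_block !mulmx0 !mul0mx !mulmxN !mulmx1 !addr0 !add0r.
by rewrite (scalar_mx_block n n 1) opp_block_mx oppr0.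
Qed.

Lemma Lambda_comm_J (Z : 'M[C]_n) : Lambda Z *m Lambda_J = Lambda_J *m Lambda Z.
Proof.
rewrite /Lambda /Lambda_J !mulmx_block.
by rewrite !mulmx0 !mul0mx !mulmxN !mulNmx !mulmx1 !mul1mx !addr0 !add0r.
Qed.

End Lambda.

Theorem mainTheorem18 (C : numClosedFieldType) (n m : nat)
  (hn : (0 < n)%N) (hm : (0 < m)%N)
  (H0 : 'M[C]_n) (H : 'I_m -> 'M[C]_n) (h : 'I_m -> C)
  (hH0 : hermitian_mx H0) (hH : forall i, hermitian_mx (H i))
  (hh : forall i, h i \is Num.real)
  (X : 'M[C]_(n + n)) (hX : sdpR_feasible H h X) :
  exists Xt : 'M[C]_(n + n),
    [/\ sdpR_feasible H h Xt,
        Xt (Ordinal (ltn_addr n hn)) (Ordinal (ltn_addr n hn)) = 0,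
        \tr (Lambda H0 *m Xt) = \tr (Lambda H0 *m X) &
        forall i, \tr (Lambda (H i) *m Xt) = \tr (Lambda (H i) *m X)].
Proof.
case: hX => psdX feasX.
pose J := Lambda_J C n.
have rJ : real_mx J := @Lambda_J_real C n.
have tJ : J^T = - J := @trmx_Lambda_J C n.
have JJ : J *m J = - 1%:M := @Lambda_J_mulJJ C n.
have LJ : forall Z, Lambda Z *m J = J *m Lambda Z := @Lambda_comm_J C n.
pose Y := Javg J X.
have psdY : real_psd Y by apply: Javg_psd.
have YJ : Y *m J = J *m Y by apply: Javg_comm.
pose i0 := Ordinal (ltn_addr n hn).
have trXt Z : \tr (Lambda Z *m kill_diag J Y i0) = \tr (Lambda Z *m X).
  by rewrite mxtrace_kill_diag ?mxtrace_Javg.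
exists (kill_diag J Y i0); split=> //.
- by split=> [|i]; [apply: kill_diag_psd | rewrite trXt].
- exact: kill_diag_diag.
Qed.
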